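(* Let $\mathcal G$ be a cluster graph on $l$ vertices consisting of $m$ clusters, and let $L_{\mathrm{nrm}}=C^{-1/2}(D-A)C^{-1/2}$ be its normalized Laplacian, where $A$ is the adjacency matrix, $D$ the degree matrix and $C=D+I$. Let $N\in\mathbb R^{l\times l}$ be a symmetric matrix, let $\tilde L_{\mathrm{nrm}}=L_{\mathrm{nrm}}+N$, and let $\tilde m$ be the number of eigenvalues of $\tilde L_{\mathrm{nrm}}$ (counted with multiplicity) that are less than $0.5$. If $\|N\|<0.5$, where $\|\cdot\|$ is the induced 2-norm, then $\tilde m=m$.
   Context: A cluster graph is a disjoint union of complete graphs (its clusters). Graphs are undirected without self-loops. *)

From HB Require Import structures.
From mathcomp Require Import all_boot all_order all_algebra.
From mathcomp Require Import boolp classical_sets reals.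
Set Implicit Arguments. Unset Strict Implicit. Unset Printing Implicit Defensive.
Import Order.TTheory GRing.Theory Num.Theory.
Local Open Scope ring_scope.
Local Open Scope classical_set_scope.

Definition simple_graph (l : nat) (e : rel 'I_l) : Prop :=
  irreflexive e /\ symmetric e.

(* Cluster graph: disjoint union of complete graphs, i.e. "x = y or x ~ y"
   is an equivalence relation (transitivity on distinct vertices). *)
Definition cluster_graph (l : nat) (e : rel 'I_l) : Prop :=
  simple_graph e /\ (forall x y z, e x y -> e y z -> x != z -> e x z).

Definition cluster_of (l : nat) (e : rel 'I_l) (x : 'I_l) : {set 'I_l} :=
  [set y | (y == x) || e x y].
Definition clusters (l : nat) (e : rel 'I_l) : {set {set 'I_l}} :=
  [set cluster_of e x | x : 'I_l].

Definition adj_mx (R : realType) (l : nat) (e : rel 'I_l) : 'M[R]_l :=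
  \matrix_(i, j) (e i j)%:R.
Definition deg (l : nat) (e : rel 'I_l) (i : 'I_l) : nat := #|[set j | e i j]|.
Definition deg_mx (R : realType) (l : nat) (e : rel 'I_l) : 'M[R]_l :=
  diag_mx (\row_i ((deg e i)%:R : R)).
Definition Cinvsqrt_mx (R : realType) (l : nat) (e : rel 'I_l) : 'M[R]_l :=
  diag_mx (\row_i (Num.sqrt ((deg e i)%:R + 1 : R))^-1).
Definition Lnrm (R : realType) (l : nat) (e : rel 'I_l) : 'M[R]_l :=
  Cinvsqrt_mx R e *m (deg_mx R e - adj_mx R e) *m Cinvsqrt_mx R e.

Definition vnorm2 (R : realType) (l : nat) (x : 'cV[R]_l) : R :=
  Num.sqrt (\sum_i x i 0 ^+ 2).
Definition opnorm2 (R : realType) (l : nat) (N : 'M[R]_l) : R :=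
  sup [set vnorm2 (N *m x) | x in [set x : 'cV[R]_l | vnorm2 x = 1]].

(* s lists the eigenvalues of M (with multiplicity): char_poly splits as
   prod_(x <- s) (X - x). *)
Definition eigen_list (R : realType) (l : nat) (M : 'M[R]_l) (s : seq R) : Prop :=
  char_poly M = \prod_(x <- s) ('X - x%:P).

(* L_nrm = I - Q, where Q is the orthogonal projector onto the span of the
   indicator vectors of the clusters; Q has rank m.  Let E_low and E_high be the
   spectral projectors of the symmetric matrix M = I - Q + N onto the eigenvalues
   below 1/2 and at least 1/2.  For v in range E_low the Rayleigh quotient of M is
   at most 1/2, while for v in ker Q it is at least 1 - |N| > 1/2; so range E_low
   meets ker Q trivially, and likewise range E_high meets range Q trivially.
   Hence rank E_low <= m and rank E_high <= l - m, and since these ranks add up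
   to l, rank E_low = m.  The spectral theorem is used over R[i]. *)

From HB Require Import structures.
From mathcomp Require Import all_boot all_order all_algebra.
From mathcomp Require Import boolp classical_sets reals.
From mathcomp Require Import complex spectral ring lra zify.
Import Order.TTheory GRing.Theory Num.Theory.
Local Open Scope ring_scope.
Set Implicit Arguments. Unset Strict Implicit. Unset Printing Implicit Defensive.

Lemma mulmx_compl_idem (R : pzRingType) n (A : 'M[R]_n) :
  A *m A = A -> (1%:M - A) *m (1%:M - A) = 1%:M - A.
Proof. by move=> AA; rewrite mulmxBl mulmxBr !mul1mx mulmxBr mulmx1 AA subrr subr0. Qed.

(* Factor A = B C through its rank: idempotence forces C B = 1, so tr A = tr (C B). *)
Lemma mxtrace_idem (F : fieldType) n (A : 'M[F]_n) :
  A *m A = A -> \tr A = (\rank A)%:R.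
Proof.
move=> AA.
have BC : col_base A *m row_base A = A by rewrite mulmx_base.
have Cfree : row_free (row_base A) by exact: row_base_free.
move: (col_base A) (row_base A) BC Cfree => B C BC Cfree.
have rB : \rank B = \rank A.
  by apply/eqP; rewrite eqn_leq rank_leq_col -{1}BC mxrankM_maxl.
have BTfree : row_free B^T by rewrite /row_free mxrank_tr rB.
have CB : C *m B = 1%:M.
  have BDC : B *m (C *m B - 1%:M) *m C = 0.
    by rewrite mulmxBr mulmxBl mulmx1 !mulmxA BC -mulmxA BC AA subrr.
  have BD : B *m (C *m B - 1%:M) = 0.
    by apply/eqP; rewrite -(mulmx_free_eq0 _ Cfree) BDC.
  have /eqP : (C *m B - 1%:M)^T = 0.
    by apply/eqP; rewrite -(mulmx_free_eq0 _ BTfree) -trmx_mul BD trmx0.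
  by rewrite -trmx0 => /eqP/trmx_inj/eqP; rewrite subr_eq0 => /eqP.
by rewrite -[in LHS]BC mxtrace_mulC CB mxtrace1.
Qed.

Lemma mxrank_idem (F : numFieldType) n (A : 'M[F]_n) k :
  A *m A = A -> \tr A = k%:R -> \rank A = k.
Proof. by move=> AA; rewrite mxtrace_idem // => /eqP; rewrite eqr_nat => /eqP. Qed.

Lemma mxrank_idem_compl (F : numFieldType) n (A : 'M[F]_n) :
  A *m A = A -> (\rank A + \rank (1%:M - A)%R)%N = n.
Proof.
move=> AA; apply/eqP; rewrite -(eqr_nat F) natrD.
rewrite -!mxtrace_idem ?mulmx_compl_idem //.
by rewrite raddfB /= mxtrace1 addrC subrK.
Qed.

Lemma char_poly_conj (F : fieldType) n (P Q A : 'M[F]_n) :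
  Q *m P = 1%:M -> char_poly (Q *m A *m P) = char_poly A.
Proof.
move=> QP; rewrite /char_poly /char_poly_mx !map_mxM.
set Qp := map_mx _ Q; set Pp := map_mx _ P; set Ap := map_mx _ A.
have QPp : Qp *m Pp = 1%:M by rewrite -map_mxM QP map_mx1.
have -> : ('X%:M : 'M[{poly F}]_n) - Qp *m Ap *m Pp = Qp *m ('X%:M - Ap) *m Pp.
  rewrite mulmxBr mulmxBl; congr (_ - _).
  by rewrite mul_mx_scalar -scalemxAl QPp -mul_scalar_mx mulmx1.
by rewrite !det_mulmx mulrC mulrA -det_mulmx (mulmx1C QPp) det1 mul1r.
Qed.

Lemma submx_idem_id (R : fieldType) m n (A : 'M[R]_n) (v : 'M[R]_(m, n)) :
  A *m A = A -> (v <= A)%MS -> v *m A = v.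
Proof. by move=> AA /submxP[w ->]; rewrite -mulmxA AA. Qed.

Section SymmetricSpectral.
Local Open Scope sesquilinear_scope.
Variable R : realType.
Local Notation C := R[i].
Local Notation toC := (real_complex R).

Lemma symmetric_spectral n (M : 'M[R]_n) : M^T = M ->
  exists (P : 'M[C]_n) (r : 'I_n -> R), P \is unitarymx /\
    map_mx toC M = P^t* *m diag_mx (\row_i toC (r i)) *m P.
Proof.
move=> MT; set Mc := map_mx toC M.
have Mherm : Mc \is hermsymmx.
  apply/is_hermitianmxP; rewrite expr0 scale1r; apply/matrixP => i j.
  by rewrite !mxE -[in LHS]MT mxE; exact: (esym (conjc_real _)).
have := hermitian_spectral_diag_real Mherm.
have /orthomx_spectralP := hermitian_normalmx Mherm.
set P := spectralmx Mc; set d := spectral_diag Mc => Mdef dreal.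
exists P, (fun i => complex.Re (d 0 i)); split; first exact: spectral_unitarymx.
rewrite Mdef invmx_unitary ?spectral_unitarymx //; congr (_ *m diag_mx _ *m _).
by apply/rowP => i; rewrite mxE RRe_real //; apply: (mxOverP dreal).
Qed.

Lemma eigen_list_spectral n (M : 'M[R]_n) (P : 'M[C]_n) (r : 'I_n -> R) :
  P \is unitarymx -> map_mx toC M = P^t* *m diag_mx (\row_i toC (r i)) *m P ->
  eigen_list M [seq r i | i <- enum 'I_n].
Proof.
move=> Pu Mdef; apply: (@map_poly_inj _ _ toC).
rewrite map_char_poly Mdef char_poly_conj; last exact: mulmx1C (unitarymxP Pu).
rewrite char_poly_trig ?diag_mx_is_trig // big_map big_enum rmorph_prod /=.
by apply: eq_bigr => i _; rewrite map_polyXsubC mxE eqxx mulr1n mxE.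
Qed.

Lemma eigen_list_perm_eq n (M : 'M[R]_n) s1 s2 :
  eigen_list M s1 -> eigen_list M s2 -> perm_eq s1 s2.
Proof. by move=> e1 e2; apply: prod_XsubC_eq; rewrite -e1 -e2. Qed.

End SymmetricSpectral.

Section ComplexForms.
Local Open Scope sesquilinear_scope.
Variable R : realType.
Local Notation C := R[i].
Local Notation toC := (real_complex R).

Definition cform n (A : 'M[C]_n) (v : 'rV[C]_n) : C := (v *m A *m v^t*) 0 0.

Definition csqnorm n (v : 'rV[C]_n) : R :=
  \sum_i (complex.Re (v 0 i) ^+ 2 + complex.Im (v 0 i) ^+ 2).

Definition rform n (A : 'M[R]_n) (a : 'I_n -> R) : R :=
  \sum_i \sum_j a i * A i j * a j.

Lemma cformD n (A B : 'M[C]_n) v : cform (A + B) v = cform A v + cform B v.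
Proof. by rewrite /cform mulmxDr mulmxDl mxE. Qed.

Lemma cform_diag n (d : 'rV[C]_n) v :
  cform (diag_mx d) v = \sum_j d 0 j * (v 0 j * (v 0 j)^*).
Proof.
rewrite /cform mxE; apply: eq_bigr => j _.
by rewrite mul_mx_diag !mxE mulrAC mulrC.
Qed.

Lemma Re_sum (I : Type) (r : seq I) (P : pred I) (F : I -> C) :
  complex.Re (\sum_(i <- r | P i) F i) = \sum_(i <- r | P i) complex.Re (F i).
Proof. by apply: (big_morph _ (fun x y => _) (erefl _)) => -[? ?] [? ?]. Qed.

Lemma Im_sum (I : Type) (r : seq I) (P : pred I) (F : I -> C) :
  complex.Im (\sum_(i <- r | P i) F i) = \sum_(i <- r | P i) complex.Im (F i).
Proof. by apply: (big_morph _ (fun x y => _) (erefl _)) => -[? ?] [? ?]. Qed.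

Lemma mulcJ (x : C) : x * x^* = toC (complex.Re x ^+ 2 + complex.Im x ^+ 2).
Proof.
by case: x => a b; apply/eqP; rewrite eq_complex /=; apply/andP; split; apply/eqP; ring.
Qed.

Lemma cform1 n (v : 'rV[C]_n) : cform 1%:M v = toC (csqnorm v).
Proof.
rewrite -diag_const_mx cform_diag rmorph_sum.
by apply: eq_bigr => j _; rewrite mxE mul1r mulcJ.
Qed.

Lemma csqnorm_ge0 n (v : 'rV[C]_n) : 0 <= csqnorm v.
Proof. by apply: sumr_ge0 => i _; rewrite addr_ge0 ?sqr_ge0. Qed.

Lemma csqnorm_eq0 n (v : 'rV[C]_n) : csqnorm v = 0 -> v = 0.
Proof.
move=> /psumr_eq0P v0; apply/rowP => i; rewrite mxE.
have /eqP : complex.Re (v 0 i) ^+ 2 + complex.Im (v 0 i) ^+ 2 = 0.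
  by apply: v0 => // j _; rewrite addr_ge0 ?sqr_ge0.
rewrite paddr_eq0 ?sqr_ge0 // !sqrf_eq0.
by case: (v 0 i) => a b /= /andP[/eqP -> /eqP ->].
Qed.

(* The imaginary parts cancel because A is symmetric. *)
Lemma cform_sym n (A : 'M[R]_n) (v : 'rV[C]_n) : A^T = A ->
  cform (map_mx toC A) v =
    toC (rform A (fun i => complex.Re (v 0 i)) + rform A (fun i => complex.Im (v 0 i))).
Proof.
move=> AT; have Asym i j : A i j = A j i by rewrite -[in LHS]AT mxE.
have -> : cform (map_mx toC A) v = \sum_j \sum_i v 0 i * toC (A i j) * (v 0 j)^*.
  rewrite /cform mxE; apply: eq_bigr => j _; rewrite !mxE mulr_suml.
  by apply: eq_bigr => i _; rewrite !mxE.
apply/eqP; rewrite eq_complex; apply/andP; split; apply/eqP.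
- rewrite Re_sum /=; under eq_bigr do rewrite Re_sum.
  rewrite /rform exchange_big -big_split /=; apply: eq_bigr => i _.
  rewrite -big_split /=; apply: eq_bigr => j _.
  by case: (v 0 i) => a1 b1; case: (v 0 j) => a2 b2 /=; ring.
- rewrite Im_sum /=; under eq_bigr do rewrite Im_sum.
  transitivity (\sum_j \sum_i complex.Im (v 0 i) * A i j * complex.Re (v 0 j)
      - \sum_j \sum_i complex.Re (v 0 i) * A i j * complex.Im (v 0 j)).
    rewrite -sumrB; apply: eq_bigr => j _; rewrite -sumrB; apply: eq_bigr => i _.
    by case: (v 0 i) => a1 b1; case: (v 0 j) => a2 b2 /=; ring.
  rewrite [X in _ - X]exchange_big /=; apply/eqP; rewrite subr_eq0; apply/eqP.
  by apply: eq_bigr => j _; apply: eq_bigr => i _; rewrite Asym; ring.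
Qed.

End ComplexForms.

Section SpectralProjector.
Local Open Scope sesquilinear_scope.
Variables (R : realType) (n : nat) (P : 'M[R[i]]_n).
Hypothesis P_unitary : P \is unitarymx.
Local Notation toC := (real_complex R).

Definition spectral_proj (g : pred 'I_n) : 'M[R[i]]_n :=
  P^t* *m diag_mx (\row_i (g i)%:R) *m P.

Lemma cform_unitary_conj (D : 'M[R[i]]_n) v :
  cform (P^t* *m D *m P) v = cform D (v *m P^t*).
Proof. by rewrite /cform trmx_mul map_mxM trmxCK !mulmxA. Qed.

Lemma spectral_proj_idem g : spectral_proj g *m spectral_proj g = spectral_proj g.
Proof.
rewrite /spectral_proj !mulmxA (mulmxtVK _ P_unitary).
rewrite -[P^t* *m _ *m diag_mx _]mulmxA mulmx_diag; congr (_ *m diag_mx _ *m _).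
by apply/rowP => i; rewrite !mxE; case: (g i); rewrite ?mulr1 ?mulr0.
Qed.

Lemma mxrank_spectral_proj g : \rank (spectral_proj g) = count g (enum 'I_n).
Proof.
apply: mxrank_idem; first exact: spectral_proj_idem.
rewrite /spectral_proj mxtrace_mulC mulmxA (unitarymxP P_unitary) mul1mx mxtrace_diag.
rewrite -sum1_count natr_sum big_enum_cond [RHS]big_mkcond /=.
by apply: eq_bigr => i _; rewrite mxE; case: (g i).
Qed.

Lemma cform_spectral_proj (r : 'I_n -> R) g v : v *m spectral_proj g = v ->
  exists w : 'I_n -> R, [/\ forall i, 0 <= w i, forall i, ~~ g i -> w i = 0,
    cform (P^t* *m diag_mx (\row_i toC (r i)) *m P) v = toC (\sum_i r i * w i)
    & csqnorm v = \sum_i w i].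
Proof.
move=> vE; set y := v *m P^t*.
have yg i : ~~ g i -> y 0 i = 0.
  move=> gi; rewrite /y -vE /spectral_proj !mulmxA (mulmxtVK _ P_unitary).
  by rewrite mul_mx_diag !mxE (negbTE gi) mulr0.
exists (fun i => complex.Re (y 0 i) ^+ 2 + complex.Im (y 0 i) ^+ 2); split.
- by move=> i; rewrite addr_ge0 ?sqr_ge0.
- by move=> i /yg ->; rewrite /= expr0n addr0.
- rewrite cform_unitary_conj cform_diag rmorph_sum; apply: eq_bigr => j _.
  by rewrite mxE mulcJ rmorphM.
- have PtP : P^t* *m 1%:M *m P = 1%:M.
    by rewrite mulmx1 (mulmx1C (unitarymxP P_unitary)).
  by apply: complexI; rewrite -cform1 -PtP cform_unitary_conj cform1.
Qed.

End SpectralProjector.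

Section OperatorNorm.
Variables (R : realType) (n : nat).
Implicit Types (N : 'M[R]_n) (x : 'cV[R]_n).

Definition sqnorm2 x : R := \sum_i x i 0 ^+ 2.

Lemma sqnorm2_ge0 x : 0 <= sqnorm2 x.
Proof. by apply: sumr_ge0 => i _; rewrite sqr_ge0. Qed.

Lemma sqnorm2_eq0 x : sqnorm2 x = 0 -> x = 0.
Proof.
move=> /psumr_eq0P x0; apply/matrixP => i j; rewrite (ord1 j) mxE.
by apply/eqP; rewrite -sqrf_eq0; apply/eqP/x0 => // k _; rewrite sqr_ge0.
Qed.

Lemma sqr_vnorm2 x : vnorm2 x ^+ 2 = sqnorm2 x.
Proof. by rewrite sqr_sqrtr ?sqnorm2_ge0. Qed.

Lemma vnorm2Z a x : vnorm2 (a *: x) = `|a| * vnorm2 x.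
Proof.
rewrite /vnorm2 -sqrtr_sqr -sqrtrM ?sqr_ge0 // mulr_sumr.
by congr Num.sqrt; apply: eq_bigr => i _; rewrite mxE exprMn.
Qed.

(* The unit sphere is bounded in every coordinate, hence so is its image. *)
Lemma opnorm2_ub N x : vnorm2 x = 1 -> vnorm2 (N *m x) <= opnorm2 N.
Proof.
move=> x1; apply: sup_upper_bound; last by exists x.
split; first by exists (vnorm2 (N *m x)), x.
exists (Num.sqrt (\sum_i (\sum_j `|N i j|) ^+ 2)).
move=> _ [y /= y1 <-]; rewrite ler_sqrt; last by apply: sumr_ge0 => i _; rewrite sqr_ge0.
have y_le1 j : `|y j 0| <= 1.
  have : y j 0 ^+ 2 <= 1.
    rewrite -(expr1n _ 2) -y1 sqr_vnorm2 /sqnorm2 (bigD1 j) //= lerDl.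
    by apply: sumr_ge0 => i _; rewrite sqr_ge0.
  rewrite -(@ler_sqr _ `|y j 0| 1) ?nnegrE //.
  by rewrite real_normK ?num_real // expr1n.
apply: ler_sum => i _.
rewrite -real_normK ?num_real //; apply: lerXn2r; rewrite ?nnegrE ?normr_ge0 //.
  by apply: sumr_ge0 => j _.
rewrite mxE; apply: le_trans (ler_norm_sum _ _ _) _.
by apply: ler_sum => j _; rewrite normrM ler_piMr.
Qed.

Lemma vnorm2_mulmx_le N x : vnorm2 (N *m x) <= opnorm2 N * vnorm2 x.
Proof.
have [->|x0] := eqVneq x 0.
  by rewrite mulmx0 /vnorm2 !big1 ?sqrtr0 ?mulr0 // => i _; rewrite mxE expr0n.
have t_gt0 : 0 < vnorm2 x.
  rewrite sqrtr_gt0 lt_def sqnorm2_ge0 andbT.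
  by apply: contra x0 => /eqP/sqnorm2_eq0 ->.
have x1 : vnorm2 ((vnorm2 x)^-1 *: x) = 1.
  by rewrite vnorm2Z ger0_norm ?invr_ge0 ?(ltW t_gt0) // mulVf ?gt_eqF.
have := opnorm2_ub N x1.
rewrite -scalemxAr vnorm2Z ger0_norm ?invr_ge0 ?(ltW t_gt0) // => Nx_le.
by rewrite -ler_pdivrMr // mulrC.
Qed.

Lemma opnorm2_lt N a : 0 < a -> opnorm2 N < a ->
  exists2 c, 0 < c < a & forall x, vnorm2 (N *m x) <= c * vnorm2 x.
Proof.
move=> a_gt0 Na; set m := Num.max (opnorm2 N) 0.
have m_ge0 : 0 <= m by rewrite le_max lexx orbT.
have m_lt : m < a by rewrite gt_max Na.
have N_le : opnorm2 N <= m by rewrite le_max lexx.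
exists ((m + a) / 2); first by apply/andP; split; lra.
move=> x; apply: le_trans (vnorm2_mulmx_le N x) _.
by apply: ler_wpM2r; [exact: sqrtr_ge0 | lra].
Qed.

(* Expand 0 <= sum_i (c a_i -+ (N a)_i)^2: a Cauchy-Schwarz argument. *)
Lemma rform_le N c (a : 'I_n -> R) : 0 < c ->
  (forall x, vnorm2 (N *m x) <= c * vnorm2 x) ->
  `|rform N a| <= c * \sum_i a i ^+ 2.
Proof.
move=> c_gt0 Nc; set x := \col_i a i.
have X_E : sqnorm2 x = \sum_i a i ^+ 2 by apply: eq_bigr => i _; rewrite mxE.
have Q_E : rform N a = \sum_i a i * (N *m x) i 0.
  apply: eq_bigr => i _; rewrite mxE mulr_sumr; apply: eq_bigr => j _.
  by rewrite mxE mulrA.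
have S_le : sqnorm2 (N *m x) <= c ^+ 2 * sqnorm2 x.
  rewrite -!sqr_vnorm2 -exprMn; apply: lerXn2r; rewrite ?nnegrE ?sqrtr_ge0 //.
  by rewrite mulr_ge0 ?sqrtr_ge0 ?ltW.
have key s : s ^+ 2 = 1 -> s * rform N a <= c * \sum_i a i ^+ 2.
  move=> s2.
  have : 0 <= \sum_i (c * a i - s * (N *m x) i 0) ^+ 2.
    by apply: sumr_ge0 => i _; rewrite sqr_ge0.
  have -> : \sum_i (c * a i - s * (N *m x) i 0) ^+ 2 =
      c ^+ 2 * sqnorm2 x - 2 * c * (s * rform N a) + s ^+ 2 * sqnorm2 (N *m x).
    rewrite Q_E X_E /sqnorm2 !mulr_sumr -sumrB -big_split /=.
    by apply: eq_bigr => i _; ring.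
  rewrite s2 mul1r -X_E => h.
  by rewrite -(ler_pM2l (_ : 0 < 2 * c)) ?mulr_gt0 //; nra.
rewrite ler_norml; apply/andP; split.
  by rewrite lerNl -mulN1r; apply: key; rewrite sqrrN expr1n.
by rewrite -[rform N a]mul1r; apply: key; rewrite expr1n.
Qed.

Lemma cform_sym_le N c (v : 'rV[R[i]]_n) : N^T = N -> 0 < c ->
  (forall x, vnorm2 (N *m x) <= c * vnorm2 x) ->
  exists2 q, cform (map_mx (real_complex R) N) v = (real_complex R) q
           & `|q| <= c * csqnorm v.
Proof.
move=> NT c_gt0 Nc; rewrite (cform_sym _ NT); eexists; first reflexivity.
rewrite /csqnorm big_split /= mulrDr; apply: le_trans (ler_normD _ _) _.
by apply: lerD; apply: rform_le.
Qed.

End OperatorNorm.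

Section ClusterGraph.
Variables (l : nat) (e : rel 'I_l).
Hypothesis e_cluster : cluster_graph e.
Local Notation cl := (cluster_of e).

Lemma cluster_of_refl x : x \in cl x.
Proof. by rewrite inE eqxx. Qed.

Lemma cluster_of_sym x y : (y \in cl x) = (x \in cl y).
Proof. by case: e_cluster => [[_ e_sym] _]; rewrite !inE eq_sym e_sym. Qed.

Lemma cluster_of_trans x y z : y \in cl x -> z \in cl y -> z \in cl x.
Proof.
case: e_cluster => [_ e_trans]; rewrite !inE.
case/orP => [/eqP -> //| exy]; case/orP => [/eqP -> |eyz]; first by rewrite exy orbT.
by have [//|zx] := eqVneq z x; rewrite (e_trans _ _ _ exy eyz) ?orbT // eq_sym.
Qed.

Lemma cluster_of_eq x y : y \in cl x -> cl y = cl x.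
Proof.
move=> yx; apply/setP => z; apply/idP/idP => [|zx]; first exact: cluster_of_trans.
by apply: cluster_of_trans zx; rewrite cluster_of_sym.
Qed.

Lemma card_cluster_of x : #|cl x| = (deg e x).+1.
Proof.
case: e_cluster => [[e_irr _] _].
have -> : cl x = x |: [set j | e x j] by apply/setP => y; rewrite !inE.
rewrite cardsU1 inE e_irr add1n; congr _.+1.
by apply: eq_card => j; rewrite !inE; apply/idP/asboolP.
Qed.

(* Q_ij = [i ~ j] / |cluster of i|: the orthogonal projector onto the span of
   the indicator vectors of the clusters. *)
Definition cluster_proj (R : numFieldType) : 'M[R]_l :=
  \matrix_(i, j) ((j \in cl i)%:R / (#|cl i|)%:R).

Variable R : numFieldType.

Lemma cluster_proj_idem : cluster_proj R *m cluster_proj R = cluster_proj R.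
Proof.
apply/matrixP => i j; rewrite !mxE.
have cl_neq0 : (#|cl i|)%:R != 0 :> R by rewrite card_cluster_of pnatr_eq0.
transitivity (\sum_(k in cl i) ((j \in cl i)%:R / (#|cl i|)%:R) / (#|cl i|)%:R : R).
  rewrite [RHS]big_mkcond /=; apply: eq_bigr => k _; rewrite !mxE.
  case: ifP => [k_in|_]; last by rewrite !mul0r.
  by rewrite (cluster_of_eq k_in) mul1r mulrC.
by rewrite sumr_const -mulr_natr; field.
Qed.

Lemma trmx_cluster_proj : (cluster_proj R)^T = cluster_proj R.
Proof.
apply/matrixP => i j; rewrite !mxE -cluster_of_sym.
by case j_in: (j \in cl i); rewrite ?mul0r // (cluster_of_eq j_in).
Qed.

Lemma mxrank_cluster_proj : \rank (cluster_proj R) = #|clusters e|.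
Proof.
apply: mxrank_idem; first exact: cluster_proj_idem.
rewrite /mxtrace; under eq_bigr do rewrite mxE cluster_of_refl mul1r.
rewrite (partition_big_imset cl) /= -sum1_card natr_sum.
apply: eq_bigr => _ /imsetP[x _ ->].
transitivity (\sum_(i in cl x) ((#|cl x|)%:R : R)^-1).
  apply: eq_big => i; last by move=> /eqP ->.
  apply/eqP/idP => [<-|/cluster_of_eq //]; exact: cluster_of_refl.
by rewrite sumr_const -[_ *+ _]mulr_natr mulVf // card_cluster_of pnatr_eq0.
Qed.

End ClusterGraph.

(* All entries of C^{-1/2} (D - A) C^{-1/2} inside a cluster share the degree d,
   and 1/sqrt(d+1)^2 = 1/|cluster|. *)
Lemma Lnrm_cluster_proj (R : realType) l (e : rel 'I_l) :
  cluster_graph e -> Lnrm R e = 1%:M - cluster_proj e R.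
Proof.
move=> e_cluster; have [[e_irr _] _] := e_cluster.
apply/matrixP => i j.
rewrite /Lnrm /Cinvsqrt_mx mul_mx_diag mul_diag_mx !mxE.
have sqrtV2 k : (Num.sqrt ((deg e k)%:R + 1 : R))^-1 ^+ 2 = ((#|cluster_of e k|)%:R)^-1.
  by rewrite exprVn sqr_sqrtr ?addr_ge0 // card_cluster_of // -addn1 natrD.
have [<-|ij] := eqVneq i j.
  rewrite cluster_of_refl e_irr subr0 mulr1n mulrAC -expr2 sqrtV2.
  rewrite card_cluster_of // mulrSr /=; field.
  by rewrite gt_eqF // ltr_wpDl ?ler0n ?ltr01.
rewrite mulr0n sub0r inE eq_sym (negbTE ij) /= sub0r.
case eij: (e i j); last by rewrite oppr0 mulr0 !mul0r oppr0.
have j_in : j \in cluster_of e i by rewrite inE eij orbT.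
have -> : deg e j = deg e i.
  by apply/eqP; rewrite -eqSS -!card_cluster_of // (cluster_of_eq e_cluster j_in).
by rewrite mulr1n mulrN mulNr mulr1 mul1r -expr2 sqrtV2.
Qed.

Section ProjectorPerturbation.
Local Open Scope sesquilinear_scope.
Variables (R : realType) (n : nat) (Q N : 'M[R]_n) (c : R).
Hypotheses (Q_idem : Q *m Q = Q) (N_sym : N^T = N).
Hypotheses (c_gt0 : 0 < c) (c_lt_half : c < 1 / 2).
Hypothesis N_le : forall x, vnorm2 (N *m x) <= c * vnorm2 x.
Local Notation toC := (real_complex R).
Variables (P : 'M[R[i]]_n) (r : 'I_n -> R).
Hypothesis P_unitary : P \is unitarymx.
Hypothesis spectral :
  map_mx toC (1%:M - Q + N) = P^t* *m diag_mx (\row_i toC (r i)) *m P.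

Let low := [pred i | r i < 1 / 2].
Let Qc := map_mx toC Q.
Let Zc := map_mx toC (1%:M - Q).

Lemma Qc_idem : Qc *m Qc = Qc.
Proof. by rewrite -map_mxM Q_idem. Qed.

Lemma Zc_idem : Zc *m Zc = Zc.
Proof. by rewrite -map_mxM mulmx_compl_idem. Qed.

Lemma cform_spectral v :
  cform (P^t* *m diag_mx (\row_i toC (r i)) *m P) v = cform Zc v + cform (map_mx toC N) v.
Proof. by rewrite -spectral -cformD -map_mxD. Qed.

Lemma csqnorm_half_le0 (v : 'rV[R[i]]_n) : (1 / 2 - c) * csqnorm v <= 0 -> v = 0.
Proof.
rewrite pmulr_rle0 ?subr_gt0 // => v_le0; apply: csqnorm_eq0.
by apply/eqP; rewrite eq_le v_le0 csqnorm_ge0.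
Qed.

Lemma spectral_low_cap_kerQ (v : 'rV[R[i]]_n) :
  v *m spectral_proj P low = v -> v *m Zc = v -> v = 0.
Proof.
move=> v_low v_Z.
have [w [w_ge0 w_low M_v v_w]] := cform_spectral_proj P_unitary r v_low.
have [q N_v q_le] := cform_sym_le v N_sym c_gt0 N_le.
have Z_v : cform Zc v = toC (csqnorm v) by rewrite -cform1 /cform v_Z mulmx1.
have /complexI M_v' : toC (\sum_i r i * w i) = toC (csqnorm v + q).
  by rewrite -M_v cform_spectral Z_v N_v rmorphD.
have rw_le : \sum_i r i * w i <= 1 / 2 * csqnorm v.
  rewrite v_w mulr_sumr; apply: ler_sum => i _.
  have [i_low|i_high] := boolP (low i); last by rewrite w_low // !mulr0.
  by rewrite mulrC [_ * w i]mulrC ler_wpM2l // ltW.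
apply: csqnorm_half_le0; move: q_le; rewrite ler_norml => /andP[q_ge _]; lra.
Qed.

Lemma spectral_high_cap_Q (v : 'rV[R[i]]_n) :
  v *m spectral_proj P (predC low) = v -> v *m Qc = v -> v = 0.
Proof.
move=> v_high v_Q.
have [w [w_ge0 w_high M_v v_w]] := cform_spectral_proj P_unitary r v_high.
have [q N_v q_le] := cform_sym_le v N_sym c_gt0 N_le.
have Z_v : cform Zc v = 0.
  by rewrite /cform /Zc map_mxB map_mx1 mulmxBr mulmx1 v_Q subrr mul0mx mxE.
have /complexI M_v' : toC (\sum_i r i * w i) = toC q.
  by rewrite -M_v cform_spectral Z_v N_v add0r.
have rw_ge : 1 / 2 * csqnorm v <= \sum_i r i * w i.
  rewrite v_w mulr_sumr; apply: ler_sum => i _.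
  have [i_high|i_low] := boolP (predC low i); last by rewrite w_high // !mulr0.
  by rewrite mulrC [r i * _]mulrC ler_wpM2l // leNgt.
apply: csqnorm_half_le0; move: q_le; rewrite ler_norml => /andP[_ q_le]; lra.
Qed.

Lemma count_spectral_low : count low (enum 'I_n) = \rank Q.
Proof.
have El_Zc : (spectral_proj P low :&: Zc = 0)%MS.
  apply/eqP/rowV0P => v; rewrite sub_capmx => /andP[v_low v_Z].
  by apply: spectral_low_cap_kerQ; apply: submx_idem_id; rewrite ?spectral_proj_idem ?Zc_idem.
have Eh_Qc : (spectral_proj P (predC low) :&: Qc = 0)%MS.
  apply/eqP/rowV0P => v; rewrite sub_capmx => /andP[v_high v_Q].
  by apply: spectral_high_cap_Q; apply: submx_idem_id; rewrite ?spectral_proj_idem ?Qc_idem.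
have := rank_leq_col (spectral_proj P low + Zc)%MS.
have := rank_leq_col (spectral_proj P (predC low) + Qc)%MS.
rewrite !mxrank_disjoint_sum // !mxrank_spectral_proj // !mxrank_map.
have := count_predC low (enum 'I_n); have := mxrank_idem_compl Q_idem.
rewrite size_enum_ord; set a := count low _; set b := count (predC low) _.
by set q := \rank Q; set z := \rank _; lia.
Qed.

End ProjectorPerturbation.

Theorem count_eigen_lt_half_perturbed_proj (R : realType) n (Q N : 'M[R]_n) :
  Q *m Q = Q -> Q^T = Q -> N^T = N -> opnorm2 N < 1 / 2 ->
  (exists s : seq R, eigen_list (1%:M - Q + N) s) /\
  (forall s : seq R, eigen_list (1%:M - Q + N) s ->
     count (fun x => x < 1 / 2) s = \rank Q).
Proof.
move=> Q_idem Q_sym N_sym N_lt.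
have half_gt0 : 0 < 1 / 2 :> R by rewrite divr_gt0.
have [c /andP[c_gt0 c_lt] N_le] := opnorm2_lt half_gt0 N_lt.
have M_sym : (1%:M - Q + N)^T = 1%:M - Q + N.
  by rewrite linearD linearB /= trmx1 Q_sym N_sym.
have [P [r [P_unitary spectral]]] := symmetric_spectral M_sym.
have M_eigen := eigen_list_spectral P_unitary spectral.
split=> [|s s_eigen]; first by exists [seq r i | i <- enum 'I_n].
rewrite (permP (eigen_list_perm_eq s_eigen M_eigen)) count_map.
rewrite -(count_spectral_low Q_idem N_sym c_gt0 c_lt N_le P_unitary spectral).
exact: eq_count.
Qed.

Theorem lemma2 (R : realType) (l m : nat) (e : rel 'I_l) (N : 'M[R]_l) :
  cluster_graph e ->
  #|clusters e| = m ->
  N^T = N ->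
  opnorm2 N < 1 / 2 ->
  (exists s : seq R, eigen_list (Lnrm R e + N) s) /\
  (forall s : seq R, eigen_list (Lnrm R e + N) s ->
     count (fun x => x < 1 / 2) s = m).
Proof.
move=> e_cluster <- N_sym N_lt.
rewrite Lnrm_cluster_proj // -(mxrank_cluster_proj e_cluster R).
apply: count_eigen_lt_half_perturbed_proj N_sym N_lt.
  exact: cluster_proj_idem.
exact: trmx_cluster_proj.
Qed.
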